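(* Assume the setup of the context and let $t\in\mathbb{R}$ be proper, with $A+tB=u(x,y;t)\prod_{j=1}^M(y+q_j(x)+x^{2L_j}\psi_j(x;t))$ as in the definition of proper. Then for each $j=1,\dots,M$, $$\mathrm{Ord}\bigl(B(x,-q_j(x)-x^{2L_j}\psi_j(x;t))\bigr)=\sum_{i=1}^MO_{ij}=2L_j+\sum_{i\ne j}O_{ij},$$ $$\mathrm{Ord}\bigl((A_y+tB_y)(x,-q_j(x)-x^{2L_j}\psi_j(x;t))\bigr)=\sum_{i\neq j}O_{ij}.$$
   Context: Setup: $P\in\mathbb{C}[x,y]$ has no zeros in $\mathbb{R}\times\mathbb{H}$ ($\mathbb{H}=\{\operatorname{Im}z>0\}$), no factors in common with $\bar P(x,y)=\overline{P(\bar x,\bar y)}$, $M=\mathrm{Ord}(P(0,y))$, and the coefficient of $y^M$ in $P(0,y)$ is real. Locally $P=u\prod_{j=1}^M(y+q_j(x)+x^{2L_j}\psi_j(x^{1/k}))$ with $u$ a unit, $k\ge1$, $L_j\in\mathbb{N}$, $q_j\in\mathbb{R}[x]$, $q_j(0)=0$, $\deg q_j<2L_j$, $\psi_j\in\mathbb{C}\{x\}$, $\operatorname{Im}\psi_j(0)>0$. $A=\tfrac12(P+\bar P)$, $B=\tfrac1{2i}(P-\bar P)$, subscripts $y$ denote $\partial/\partial y$. $O_{ij}=\min\{\mathrm{Ord}(q_j-q_i),2L_j,2L_i\}$, Ord = order of vanishing at $0$. A real $t$ is called proper if there is a local factorization $A+tB=u(x,y;t)\prod_{j=1}^M(y+q_j(x)+x^{2L_j}\psi_j(x;t))$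 with $u(\cdot,\cdot;t)$ a unit in $\mathbb{C}\{x,y\}$, $\psi_j(\cdot;t)\in\mathbb{R}\{x\}$, and $\mathrm{Ord}(q_j-q_i+x^{2L_j}\psi_j(x;t)-x^{2L_i}\psi_i(x;t))=O_{ij}$ for all $i\ne j$ (all but finitely many $t$ are proper). *)

From HB Require Import structures.
From mathcomp Require Import all_boot all_order all_algebra.
From mathcomp Require Import reals complex.
Set Implicit Arguments. Unset Strict Implicit. Unset Printing Implicit Defensive.
Import Order.TTheory GRing.Theory Num.Theory.
Local Open Scope ring_scope.

Section Defs.
Variable R : realType.
Local Notation C := R[i].

(* a : nat -> C stands for  sum_m a m x^m. *)

Definition conv1 (a : nat -> C) : Prop :=
  exists r : R, 0 < r /\ exists K : R, forall m, `|a m| * ((r ^+ m)%:C)%C <= (K%:C)%C.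

Definition conv1R (a : nat -> R) : Prop :=
  exists r : R, 0 < r /\ exists K : R, forall m, `|a m| * r ^+ m <= K.

Definition ord_eq (a : nat -> C) (n : nat) : Prop :=
  a n != 0 /\ forall m, (m < n)%N -> a m = 0.

Definition ser_of_poly (p : {poly C}) : nat -> C := fun m => p`_m.
Definition ser_of_real (a : nat -> R) : nat -> C := fun m => ((a m)%:C)%C.
Definition sadd (a b : nat -> C) : nat -> C := fun m => a m + b m.
Definition sopp (a : nat -> C) : nat -> C := fun m => - a m.
Definition smul (a b : nat -> C) : nat -> C :=
  fun m => \sum_(i < m.+1) a i * b (m - i)%N.
Definition sone : nat -> C := fun m => (m == 0%N)%:R.
Definition spow (a : nat -> C) (n : nat) : nat -> C := iter n (smul a) sone.
(* x^e * a(x) *)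
Definition sshift (e : nat) (a : nat -> C) : nat -> C :=
  fun m => if (e <= m)%N then a (m - e)%N else 0.

(* ---------- bivariate polynomials: P : {poly {poly C}}, outer variable y,
   inner variable x, i.e. P = sum_n (P`_n)(x) y^n ---------- *)

Definition peval2 (P : {poly {poly C}}) (x y : C) : C :=
  (map_poly (fun c : {poly C} => c.[x]) P).[y].

(* Pbar(x,y) = conj (P (conj x, conj y)) : conjugate all coefficients *)
Definition pconj2 (P : {poly {poly C}}) : {poly {poly C}} :=
  map_poly (map_poly (fun z : C => (z^*)%C)) P.

Definition pat0 (P : {poly {poly C}}) : {poly C} :=
  map_poly (fun c : {poly C} => c.[0]) P.

Definition pdivides2 (Q P : {poly {poly C}}) : Prop := exists S, P = Q * S.
Definition pconst2 (Q : {poly {poly C}}) : Prop := exists c : C, Q = c%:P%:P.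

Definition Apart (P : {poly {poly C}}) : {poly {poly C}} :=
  ((2%:R)^-1 : C)%:P%:P * (P + pconj2 P).
Definition Bpart (P : {poly {poly C}}) : {poly {poly C}} :=
  ((2%:R * 'i%C)^-1 : C)%:P%:P * (P - pconj2 P).

(* P(x, s(x)) as a power series in x, for a power series s *)
Definition peval_ser (P : {poly {poly C}}) (s : nat -> C) : nat -> C :=
  fun m => \sum_(n < size P) smul (ser_of_poly P`_n) (spow s n) m.

(* ---------- bivariate power series: a m n = coefficient of x^m y^n ---------- *)
Definition conv2 (a : nat -> nat -> C) : Prop :=
  exists r : R, 0 < r /\ exists K : R, forall m n, `|a m n| * ((r ^+ (m + n))%:C)%C <= (K%:C)%C.

Definition bser_of_poly (P : {poly {poly C}}) : nat -> nat -> C :=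
  fun m n => (P`_n)`_m.
Definition bmul (a b : nat -> nat -> C) : nat -> nat -> C :=
  fun m n => \sum_(i < m.+1) \sum_(j < n.+1) a i j * b (m - i)%N (n - j)%N.
Definition bone : nat -> nat -> C := fun m n => ((m == 0%N) && (n == 0%N))%:R.
(* the bivariate series  y + c(x) *)
Definition bfactor (c : nat -> C) : nat -> nat -> C :=
  fun m n => if n == 1%N then (m == 0%N)%:R else if n == 0%N then c m else 0.
(* a(x^k, y) as a series in (x, y) *)
Definition bsubst (k : nat) (a : nat -> nat -> C) : nat -> nat -> C :=
  fun m n => if (k %| m)%N then a (m %/ k)%N n else 0.
Definition ssubst (k : nat) (a : nat -> C) : nat -> C :=
  fun m => if (k %| m)%N then a (m %/ k)%N else 0.

Definition pord (p : {poly R}) : nat := find (fun c => c != 0) p.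
(* O_ij = min { Ord(q_j - q_i), 2 L_j, 2 L_i }, with Ord 0 = +oo *)
Definition Onum (qi qj : {poly R}) (Li Lj : nat) : nat :=
  if qj - qi == 0 then minn (2 * Lj) (2 * Li)
  else minn (pord (qj - qi)) (minn (2 * Lj) (2 * Li)).

End Defs.

From HB Require Import structures.
From mathcomp Require Import all_boot all_order all_algebra.
From mathcomp Require Import reals complex.
From mathcomp Require Import zify ring.
Import Order.TTheory GRing.Theory Num.Theory.
Local Open Scope ring_scope.

Set Implicit Arguments. Unset Strict Implicit. Unset Printing Implicit Defensive.

(* On the branch y = -q_j - x^(2 L_j) psi_j(x; t) the j-th factor of A + tB vanishes, so
   A + tB vanishes there and, as P = A + iB, P = (i - t) B along it.  The order of P on the
   branch is read off the factorization of P after substituting x = s^k: the i-th factor has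
   order k O_ij in s, since the real coefficients of the branches of A + tB cannot cancel the
   coefficient psi_i(0) of x^(2 L_i), which has positive imaginary part.  Differentiating the
   factorization of A + tB in y and restricting to the branch leaves only the product of the
   other factors, whose orders O_ij are given by properness.  Ord P(0, y) = M makes every L_j
   positive, so the branch passes through the origin; the series identities are all checked
   on polynomial truncations of high enough degree. *)

Section PolyOrder.
Variable K : nzRingType.

Definition poly_ord_eq (p : {poly K}) (n : nat) : Prop :=
  p`_n != 0 /\ forall m, (m < n)%N -> p`_m = 0.

Lemma poly_ord_eq1 : poly_ord_eq 1 0.
Proof. by split => //; rewrite coef1 oner_neq0. Qed.

Lemma poly_ord_eq_XaddC (c : K) : poly_ord_eq ('X + c%:P) (c == 0).
Proof.
have [->|nz_c] := eqVneq c 0; split => //.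
- by rewrite addr0 coefX oner_eq0.
- by case=> //; rewrite addr0 coefX.
- by rewrite coefD coefX coefC add0r.
Qed.

End PolyOrder.

Section PolyOrderIdomain.
Variable K : idomainType.

Lemma poly_ord_eqM (p q : {poly K}) a b :
  poly_ord_eq p a -> poly_ord_eq q b -> poly_ord_eq (p * q) (a + b).
Proof.
move=> [pa p_lt] [qb q_lt].
have vanish i : (i <= a + b)%N -> i != a -> p`_i * q`_(a + b - i) = 0.
  move=> le_i ne_ia; case: (ltnP i a) => [lt_ia|le_ai]; first by rewrite p_lt ?mul0r.
  by rewrite q_lt ?mulr0 //; move: ne_ia => /eqP; lia.
split.
  have lt_a : (a < (a + b).+1)%N by lia.
  rewrite coefM (bigD1 (Ordinal lt_a)) //= big1 ?addr0 => [|i ne_i].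
    by rewrite addKn mulf_neq0.
  by apply: vanish; [rewrite -ltnS | apply: contra ne_i => /eqP eq_i; apply/eqP/val_inj].
move=> m lt_m; rewrite coefM big1 // => i _.
case: (ltnP i a) => [lt_ia|le_ai]; first by rewrite p_lt ?mul0r.
by rewrite q_lt ?mulr0 //; have := ltn_ord i; lia.
Qed.

Lemma poly_ord_eq_prod (I : finType) (P : pred I) (F : I -> {poly K}) (o : I -> nat) :
  (forall i, P i -> poly_ord_eq (F i) (o i)) ->
  poly_ord_eq (\prod_(i | P i) F i) (\sum_(i | P i) o i).
Proof.
move=> ordF; apply: (big_ind2 (@poly_ord_eq K)); first exact: poly_ord_eq1.
  by move=> ? ? ? ?; apply: poly_ord_eqM.
exact: ordF.
Qed.

End PolyOrderIdomain.

Section Horner.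
Variable K : comNzRingType.

Lemma coef_exp_lt (Y : {poly K}) n m : Y`_0 = 0 -> (m < n)%N -> (Y ^+ n)`_m = 0.
Proof.
move=> Y0 lt_mn.
have -> : Y = drop_poly 1 Y * 'X.
  rewrite -{1}(poly_take_drop 1 Y) expr1 addrC (_ : take_poly 1 Y = 0) ?addr0 //.
  by apply/polyP => -[|i]; rewrite coef_take_poly coef0.
by rewrite exprMn coefMXn lt_mn.
Qed.

Lemma coef_horner_agree N (Q1 Q2 : {poly {poly K}}) (Y : {poly K}) :
  (forall m n, (m < N)%N -> (n < N)%N -> (Q1`_n)`_m = (Q2`_n)`_m) ->
  Y`_0 = 0 -> forall m, (m < N)%N -> (Q1.[Y])`_m = (Q2.[Y])`_m.
Proof.
move=> agree Y0 m lt_mN; set n0 := maxn (size Q1) (size Q2).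
rewrite (horner_coef_wide Y (leq_maxl _ _ : size Q1 <= n0)%N).
rewrite (horner_coef_wide Y (leq_maxr _ _ : size Q2 <= n0)%N) !coef_sum.
apply: eq_bigr => n _; rewrite !coefM; apply: eq_bigr => i _.
have := ltn_ord i; case: (ltnP n N) => [lt_nN|le_Nn] lt_i.
  by rewrite agree //; lia.
by rewrite coef_exp_lt ?mulr0 //; lia.
Qed.

Lemma coef0_horner (Q : {poly {poly K}}) (Y : {poly K}) :
  Y`_0 = 0 -> (Q.[Y])`_0 = (Q`_0)`_0.
Proof.
move=> Y0; rewrite (@coef_horner_agree 1 Q (Q`_0)%:P) ?hornerC //.
by move=> [|//] [|//] _ _; rewrite coefC.
Qed.

Lemma horner_derivMXaddC (c : K) (W : {poly K}) :
  (('X + c%:P) * W)^`().[- c] = W.[- c].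
Proof.
rewrite derivM derivD derivX derivC addr0 mul1r hornerD hornerM.
by rewrite hornerD hornerX hornerC addNr mul0r addr0.
Qed.

End Horner.

Section Series.
Variable R : realType.
Local Notation C := R[i].
Implicit Types (a : nat -> C) (b U : nat -> nat -> C) (Q H : {poly {poly C}}).

Lemma ord_eq_uniq a m n : ord_eq a m -> ord_eq a n -> m = n.
Proof.
move=> [am a_ltm] [an a_ltn]; case: (ltngtP m n) => // lt.
- by move: am; rewrite a_ltn ?eqxx.
- by move: an; rewrite a_ltm ?eqxx.
Qed.

Lemma ord_eq_scale (c : C) a a' n :
  c != 0 -> (forall m, a' m = c * a m) -> ord_eq a n -> ord_eq a' n.
Proof.
move=> nz_c a'E [an a_lt]; split; first by rewrite a'E mulf_neq0.
by move=> m lt_m; rewrite a'E a_lt ?mulr0.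
Qed.

Lemma ord_eq_ext a a' n : (forall m, a m = a' m) -> ord_eq a n -> ord_eq a' n.
Proof. by move=> aE; apply: (ord_eq_scale (oner_neq0 _)) => m; rewrite mul1r aE. Qed.

Lemma ord_eq_ssubst k a n : (0 < k)%N -> ord_eq (ssubst k a) (k * n) -> ord_eq a n.
Proof.
rewrite /ssubst => k_gt0 [akn a_lt]; split; first by rewrite dvdn_mulr // mulKn in akn.
move=> m lt_mn; have := a_lt (k * m)%N; rewrite dvdn_mulr // mulKn //.
by apply; rewrite ltn_pmul2l.
Qed.

Definition trunc N a : {poly C} := \poly_(m < N) a m.

Lemma trunc_opp N a : trunc N (sopp a) = - trunc N a.
Proof. by apply/polyP => m; rewrite coefN !coef_poly; case: ifP; rewrite ?oppr0. Qed.

Lemma poly_ord_eq_trunc N a n : (n < N)%N -> ord_eq a n -> poly_ord_eq (trunc N a) n.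
Proof.
move=> lt_nN [an a_lt]; split; first by rewrite coef_poly lt_nN.
by move=> m lt_mn; rewrite coef_poly a_lt ?if_same.
Qed.

Lemma ord_eq_agree N a (p : {poly C}) n :
  (n < N)%N -> (forall m, (m < N)%N -> a m = p`_m) -> poly_ord_eq p n -> ord_eq a n.
Proof.
move=> lt_nN aE [pn p_lt]; split; first by rewrite aE.
by move=> m lt_mn; rewrite aE ?p_lt //; lia.
Qed.

Definition btrunc N b : {poly {poly C}} := \poly_(n < N) \poly_(m < N) b m n.

Definition bagree N b Q :=
  forall m n, (m < N)%N -> (n < N)%N -> b m n = (Q`_n)`_m.

Lemma bagree_btrunc N b : bagree N b (btrunc N b).
Proof. by move=> m n lt_m lt_n; rewrite coef_poly lt_n coef_poly lt_m. Qed.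

Lemma bagree_bone N : bagree N (@bone R) 1.
Proof.
move=> m n _ _; rewrite /bone coef1.
by case: (n == 0%N); rewrite ?coef1 ?coef0 ?andbT ?andbF.
Qed.

Lemma bagree_bmul N b1 b2 Q1 Q2 :
  bagree N b1 Q1 -> bagree N b2 Q2 -> bagree N (bmul b1 b2) (Q1 * Q2).
Proof.
move=> agree1 agree2 m n lt_m lt_n; rewrite /bmul coefM coef_sum exchange_big /=.
apply: eq_bigr => j _; rewrite coefM; apply: eq_bigr => i _.
have := ltn_ord i; have := ltn_ord j => lt_j lt_i.
by rewrite agree1 ?agree2 //; lia.
Qed.

Lemma bagree_bfactor N a : bagree N (bfactor a) ('X + (trunc N a)%:P).
Proof.
move=> m [|[|n]] lt_m _; rewrite /bfactor coefD coefX coefC /=.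
- by rewrite add0r coef_poly lt_m.
- by rewrite addr0 coef1.
- by rewrite addr0 coef0.
Qed.

Lemma bagree_factorization N U (I : finType) (c : I -> nat -> C) :
  bagree N (bmul U (\big[@bmul R/@bone R]_i bfactor (c i)))
    (btrunc N U * \prod_i ('X + (trunc N (c i))%:P)).
Proof.
apply/bagree_bmul/(big_ind2 (bagree N)); first exact: bagree_btrunc.
- exact: bagree_bone.
- by move=> ? ? ? ?; apply: bagree_bmul.
- by move=> i _; apply: bagree_bfactor.
Qed.

Lemma bagree_deriv N Q H :
  bagree N.+1 (bser_of_poly Q) H -> bagree N (bser_of_poly Q^`()) H^`().
Proof.
move=> agree m n lt_m lt_n.
by rewrite /bser_of_poly !coef_deriv !coefMn -agree //; lia.
Qed.

Lemma coef_spow N s n m : (m < N)%N -> spow s n m = ((trunc N s) ^+ n)`_m.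
Proof.
elim: n m => [|n IHn] m lt_m; first by rewrite expr0 coef1.
rewrite exprS coefM /spow iterS -/(spow s n) /smul.
apply: eq_bigr => i _; have := ltn_ord i => lt_i.
by rewrite coef_poly IHn; [rewrite ifT //; lia | lia].
Qed.

Lemma coef_peval_ser N Q s m : (m < N)%N -> peval_ser Q s m = (Q.[trunc N s])`_m.
Proof.
move=> lt_m; rewrite /peval_ser horner_coef coef_sum; apply: eq_bigr => n _.
rewrite coefM /smul; apply: eq_bigr => i _.
by rewrite (@coef_spow N) //; have := ltn_ord i; lia.
Qed.

Lemma coef_peval_ser_agree N Q H s m :
  bagree N (bser_of_poly Q) H -> s 0%N = 0 -> (m < N)%N ->
  peval_ser Q s m = (H.[trunc N s])`_m.
Proof.
move=> agree s0 lt_m; rewrite (coef_peval_ser _ _ lt_m).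
apply: coef_horner_agree lt_m => [m' n lt_m' lt_n|]; first by rewrite -agree.
by rewrite coef_poly s0; case: ifP.
Qed.

Lemma horner_factor_trunc N a s :
  ('X + (trunc N a)%:P).[trunc N s] = trunc N (sadd a s).
Proof.
rewrite hornerD hornerX hornerC; apply/polyP => m.
by rewrite coefD !coef_poly /sadd; case: ifP; rewrite ?addr0 // addrC.
Qed.

Lemma poly_ord_eq_horner_factors N U (I : finType) (P : pred I)
    (c : I -> nat -> C) s (o : I -> nat) :
  U 0%N 0%N != 0 -> s 0%N = 0 -> (\sum_(i | P i) o i < N)%N ->
  (forall i, P i -> ord_eq (sadd (c i) s) (o i)) ->
  poly_ord_eq ((btrunc N U * \prod_(i | P i) ('X + (trunc N (c i))%:P)).[trunc N s])
              (\sum_(i | P i) o i).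
Proof.
move=> U00 s0 lt_sum ord_c; rewrite -[X in poly_ord_eq _ X]add0n hornerM horner_prod.
apply: poly_ord_eqM.
  split=> [|//]; rewrite coef0_horner; last by rewrite coef_poly s0; case: ifP.
  by rewrite -bagree_btrunc // (leq_ltn_trans _ lt_sum).
apply: poly_ord_eq_prod => i Pi; rewrite horner_factor_trunc.
apply: poly_ord_eq_trunc (ord_c i Pi); apply: leq_ltn_trans lt_sum.
by rewrite (bigD1 i) //= leq_addr.
Qed.

Lemma ord_eq_factors_at0 (I : finType) U (c : I -> nat -> C) b :
  (forall m n, b m n = bmul U (\big[@bmul R/@bone R]_i bfactor (c i)) m n) ->
  U 0%N 0%N != 0 -> ord_eq (b 0%N) (\sum_i ((c i 0%N == 0%R) : nat)).
Proof.
move=> bE U00; set S := (\sum_i _)%N.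
set H := btrunc S.+1 U * \prod_i ('X + (trunc S.+1 (c i))%:P).
apply: (@ord_eq_agree S.+1 _ (map_poly (horner_eval 0) H)) => // [n lt_n|].
  by rewrite coef_map /= horner_evalE horner_coef0 bE (bagree_factorization (N := S.+1)).
rewrite rmorphM rmorph_prod -[S]add0n /=; apply: poly_ord_eqM.
  split=> [|//]; rewrite coef_map /= horner_evalE horner_coef0.
  by rewrite -bagree_btrunc.
apply: poly_ord_eq_prod => i _.
rewrite rmorphD /= map_polyX map_polyC /= horner_evalE horner_coef0 coef_poly /=.
exact: poly_ord_eq_XaddC.
Qed.

End Series.

Section Factorization.
Variables (R : realType) (I : finType) (Q : {poly {poly R[i]}}).
Variables (U : nat -> nat -> R[i]) (c : I -> nat -> R[i]).
Hypothesis QE : forall m n,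
  bser_of_poly Q m n = bmul U (\big[@bmul R/@bone R]_i bfactor (c i)) m n.

Let bagreeQ N : bagree N (bser_of_poly Q) (btrunc N U * \prod_i ('X + (trunc N (c i))%:P)).
Proof. by move=> m n lt_m lt_n; rewrite QE (bagree_factorization (N := N)). Qed.

Lemma ord_eq_peval_ser_factors s (o : I -> nat) :
  U 0%N 0%N != 0 -> s 0%N = 0 -> (forall i, ord_eq (sadd (c i) s) (o i)) ->
  ord_eq (peval_ser Q s) (\sum_i o i).
Proof.
move=> U00 s0 ord_c; set T := (\sum_i o i)%N.
set H := btrunc T.+1 U * \prod_i ('X + (trunc T.+1 (c i))%:P).
apply: (@ord_eq_agree _ T.+1 _ H.[trunc T.+1 s]) => [//|m lt_m|].
  exact: coef_peval_ser_agree (bagreeQ (N := T.+1)) s0 lt_m.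
exact: poly_ord_eq_horner_factors.
Qed.

Variable j : I.
Hypothesis cj0 : c j 0%N = 0.

Let sopp_cj0 : sopp (c j) 0%N = 0.
Proof. by rewrite /sopp cj0 oppr0. Qed.

Lemma peval_ser_factor_root m : peval_ser Q (sopp (c j)) m = 0.
Proof.
rewrite (coef_peval_ser_agree (bagreeQ (N := m.+1))) // trunc_opp (bigD1 j) //= mulrCA.
by rewrite hornerM hornerD hornerX hornerC addNr mul0r coef0.
Qed.

Lemma ord_eq_peval_ser_deriv_root (o : I -> nat) :
  U 0%N 0%N != 0 -> (forall i, i != j -> ord_eq (sadd (c i) (sopp (c j))) (o i)) ->
  ord_eq (peval_ser Q^`() (sopp (c j))) (\sum_(i | i != j) o i).
Proof.
move=> U00 ord_c; set S := (\sum_(i | i != j) o i)%N.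
set W := btrunc S.+2 U * \prod_(i | i != j) ('X + (trunc S.+2 (c i))%:P).
have agree' : bagree S.+1 (bser_of_poly Q^`()) (('X + (trunc S.+2 (c j))%:P) * W)^`().
  by apply: bagree_deriv; have := bagreeQ (N := S.+2); rewrite (bigD1 j) //= mulrCA.
apply: (@ord_eq_agree _ S.+1 _ W.[trunc S.+2 (sopp (c j))]) => [//|m lt_m|].
  have Y0 : (trunc S.+2 (sopp (c j)))`_0 = 0 by rewrite coef_poly sopp_cj0.
  rewrite (coef_peval_ser _ _ (leqW lt_m)) (coef_horner_agree agree' Y0 lt_m).
  by rewrite trunc_opp horner_derivMXaddC.
exact: poly_ord_eq_horner_factors.
Qed.

End Factorization.

Section SubstXn.
Variables (R : realType) (k : nat).
Hypothesis k_gt0 : (0 < k)%N.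

Lemma bser_of_poly_comp_Xn (P : {poly {poly R[i]}}) m n :
  bser_of_poly (map_poly (comp_poly 'X^k) P) m n = bsubst k (bser_of_poly P) m n.
Proof. by rewrite /bser_of_poly /bsubst coef_map /= coef_comp_poly_Xn. Qed.

Lemma trunc_ssubst N (a : nat -> R[i]) : trunc (k * N) (ssubst k a) = trunc N a \Po 'X^k.
Proof.
apply/polyP => m; rewrite coef_comp_poly_Xn // !coef_poly /ssubst.
have [/dvdnP[m' ->]|//] := boolP (k %| m)%N; last by rewrite if_same.
by rewrite mulnK // mulnC ltn_pmul2l.
Qed.

Lemma peval_ser_comp_Xn (P : {poly {poly R[i]}}) s m :
  peval_ser (map_poly (comp_poly 'X^k) P) (ssubst k s) m = ssubst k (peval_ser P s) m.
Proof.
have lt_m : (m < k * m.+1)%N by nia.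
rewrite (coef_peval_ser _ _ lt_m) trunc_ssubst horner_map coef_comp_poly_Xn //.
rewrite /ssubst; case: ifP => // _; rewrite (@coef_peval_ser _ m.+1) //.
by rewrite ltnS leq_div.
Qed.

(* A factor [y + q_i(s^k) + s^(2 k L) psi(s)] of [P] evaluated on another branch becomes
   [s^(2 k L) psi(s) - b(s^k)]: either [b] has order [n < 2 L], or [n = 2 L] and the real
   coefficient [b n] cannot cancel [psi 0], which lies in the upper half plane. *)
Lemma ord_eq_shift_sub_ssubst L n (b psi : nat -> R[i]) :
  (n <= 2 * L)%N -> (forall m, (m < n)%N -> b m = 0) -> ((n < 2 * L)%N -> b n != 0) ->
  b n \is Num.real -> 0 < 'Im (psi 0%N) ->
  ord_eq (sadd (sopp (ssubst k b)) (sshift (2 * k * L) psi)) (k * n).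
Proof.
move=> le_n b_lt b_n real_bn Im_psi; rewrite /sadd /sopp /ssubst /sshift.
split.
  rewrite dvdn_mulr // mulKn //; have [lt_n|ge_n] := ltnP n (2 * L).
    by rewrite ifF ?addr0 ?oppr_eq0 ?b_n //; nia.
  have nE : n = (2 * L)%N by lia.
  subst n; rewrite ifT; last by nia.
  rewrite (_ : (k * (2 * L) - 2 * k * L = 0)%N); last by nia.
  apply: contraTneq Im_psi => /eqP; rewrite addrC subr_eq0 => /eqP ->.
  by rewrite (Creal_ImP _ real_bn) ltxx.
move=> m lt_m; have lt_m2L : (m < 2 * k * L)%N by nia.
rewrite leqNgt lt_m2L addr0.
case: ifP => [/dvdnP[m' mE]|_]; last by rewrite oppr0.
by rewrite b_lt ?oppr0 // mE mulnK // -(ltn_pmul2l k_gt0) mulnC -mE.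
Qed.

End SubstXn.

Lemma Apart_add_iBpart (R : realType) (P : {poly {poly R[i]}}) :
  Apart P + ('i%C)%:P%:P * Bpart P = P.
Proof.
have nz_i : ('i%C : R[i]) != 0.
  by apply/eqP => /(congr1 (@complex.Im R)) /= /eqP; rewrite oner_eq0.
rewrite /Apart /Bpart mulrA -!polyCM invfM mulrCA divff // mulr1 -mulrDr.
rewrite addrACA subrr addr0 -mulr2n mulrnAr -mulrnAl -!polyCMn.
by rewrite (_ : 2^-1 *+ 2 = 1 :> R[i]) ?mul1r //; field.
Qed.

Lemma ord_eq_peval_ser_Bpart (R : realType) (P : {poly {poly R[i]}}) (t : R) s n :
  (forall m, peval_ser (Apart P + (t%:C)%C%:P%:P * Bpart P) s m = 0) ->
  ord_eq (peval_ser P s) n -> ord_eq (peval_ser (Bpart P) s) n.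
Proof.
move=> root_s; have nz_it : ('i%C - (t%:C)%C : R[i]) != 0.
  by apply/eqP => /(congr1 (@complex.Im R)) /= /eqP; rewrite subr0 oner_eq0.
apply: (ord_eq_scale (invr_neq0 nz_it)) => m.
have := root_s m; rewrite -[in peval_ser P](Apart_add_iBpart P).
rewrite !(@coef_peval_ser _ m.+1) //; set Y := trunc m.+1 s.
move: (Apart P) (Bpart P) => A B; rewrite !hornerD !hornerM !hornerC !coefD !coefCM.
move=> root_m; apply: (mulfI nz_it); rewrite [RHS]mulrA mulfV // mul1r.
have -> : (A.[Y])`_m = - ((t%:C)%C * (B.[Y])`_m) by apply/eqP; rewrite -addr_eq0 root_m.
ring.
Qed.

Lemma sum_nat_bool_eq_card (I : finType) (b : I -> bool) :
  (\sum_i (b i : nat))%N = #|I| -> forall i, b i.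
Proof.
move=> sum_b i; apply/negPn/negP => nbi.
have : (\sum_i (b i : nat) < \sum_(i : I) 1)%N.
  rewrite (bigD1 i) //= [X in (_ < X)%N](bigD1 i) //= (negbTE nbi) add0n add1n ltnS.
  by apply: leq_sum => i' _; case: (b i').
by rewrite sum1_card sum_b ltnn.
Qed.

Section Branches.
Variables (R : realType) (M k : nat) (L : 'I_M -> nat) (q : 'I_M -> {poly R}).
Variables (psi : 'I_M -> nat -> R[i]) (psit : 'I_M -> nat -> R).
Local Notation emb := (map_poly (fun a : R => (a%:C)%C)).

(* [branch i] is q_i + x^(2 L_i) psi_i(x; t), so the factors of A + tB are y + [branch i];
   [branch_sub i] is the matching factor of P after x = s^k, and [branch_gap i j] is the
   series whose order O_ij properness prescribes. *)
Definition branch i :=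
  sadd (ser_of_poly (emb (q i))) (sshift (2 * L i) (ser_of_real (psit i))).

Definition branch_sub i :=
  sadd (ssubst k (ser_of_poly (emb (q i)))) (sshift (2 * k * L i) (psi i)).

Definition branch_gap i j :=
  sadd (ser_of_poly (emb (q j - q i)))
       (sadd (sshift (2 * L j) (ser_of_real (psit j)))
             (sopp (sshift (2 * L i) (ser_of_real (psit i))))).

Lemma coef_emb (p : {poly R}) m : (emb p)`_m = ((p`_m)%:C)%C.
Proof. by rewrite coef_map_id0 // rmorph0. Qed.

Lemma branch_gapE i j m : branch_gap i j m = branch j m - branch i m.
Proof.
rewrite /branch_gap /branch /sadd /sopp /ser_of_poly !coef_emb coefB rmorphB /=.
ring.
Qed.

Lemma branch_gap_real i j m : branch_gap i j m \is Num.real.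
Proof.
have real_C (x : R) : (x%:C)%C \is Num.real by rewrite complex_real.
rewrite /branch_gap /sadd /sopp /sshift /ser_of_real /ser_of_poly coef_emb.
by rewrite rpredD ?rpredB ?real_C //; case: ifP; rewrite ?real_C ?rpred0.
Qed.

Hypothesis q0 : forall i, (q i).[0] = 0.
Hypothesis Im_psi : forall i, 0 < 'Im (psi i 0%N).

Lemma branch_sub0_L_gt0 i : branch_sub i 0%N = 0 -> (0 < L i)%N.
Proof.
move=> b0; rewrite lt0n; apply/eqP => L0; move: b0 (Im_psi i).
rewrite /branch_sub /sadd /ssubst /sshift dvdn0 div0n /ser_of_poly coef_emb.
rewrite -horner_coef0 q0 add0r L0 muln0 leqnn subnn => ->.
by rewrite (Creal_ImP _ (rpred0 _)) ltxx.
Qed.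

(* [M = Ord(P(0, y))] forces all [M] branches of [P] through the origin. *)
Lemma branch_L_gt0 (P : {poly {poly R[i]}}) (u : nat -> nat -> R[i]) :
  (pat0 P)`_M != 0 -> (forall m, (m < M)%N -> (pat0 P)`_m = 0) -> u 0%N 0%N != 0 ->
  bsubst k (bser_of_poly P) =
    bmul (bsubst k u) (\big[@bmul R/@bone R]_(i < M) bfactor (branch_sub i)) ->
  forall i, (0 < L i)%N.
Proof.
move=> PM P_ltM u00 PE i; apply/branch_sub0_L_gt0/eqP.
have pat0E n : (pat0 P)`_n = bsubst k (bser_of_poly P) 0%N n.
  by rewrite /pat0 coef_map_id0 ?horner0 // /bsubst dvdn0 div0n horner_coef0.
have ordM : ord_eq (bsubst k (bser_of_poly P) 0%N) M.
  by split => [|m lt_m]; rewrite -pat0E; [exact: PM | exact: P_ltM].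
have u00' : bsubst k u 0%N 0%N != 0 by rewrite /bsubst dvdn0 div0n.
have sumM := ord_eq_uniq ordM (ord_eq_factors_at0 (fun m n => congr1 (fun b => b m n) PE) u00').
by apply: (sum_nat_bool_eq_card (b := fun i => branch_sub i 0%N == 0)); rewrite card_ord.
Qed.

Lemma ord_eq_branch_sub_branch i j :
  (0 < k)%N -> (i != j -> ord_eq (branch_gap i j) (Onum (q i) (q j) (L i) (L j))) ->
  ord_eq (sadd (branch_sub i) (ssubst k (sopp (branch j))))
         (k * Onum (q i) (q j) (L i) (L j)).
Proof.
move=> k_gt0 ord_gap; set O := Onum _ _ _ _.
set b := sadd (branch_gap i j) (sshift (2 * L i) (ser_of_real (psit i))).
have le_O : (O <= 2 * L i)%N by rewrite /O /Onum; case: ifP => _; lia.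
have gap_lt m : (m < O)%N -> branch_gap i j m = 0.
  have [->|ne_ij] := eqVneq i j; first by rewrite branch_gapE subrr.
  by case: (ord_gap ne_ij) => _; apply.
have b_lt m : (m < O)%N -> b m = 0.
  by move=> lt_m; rewrite /b /sadd /sshift gap_lt // ifF ?addr0 //; lia.
apply: ord_eq_ext (ord_eq_shift_sub_ssubst k_gt0 le_O b_lt _ _ (Im_psi i)) => [m||].
- rewrite /b /branch_sub /sadd /sopp /ssubst.
  by case: ifP => _; rewrite ?branch_gapE /branch /sadd; ring.
- move=> lt_O; have ne_ij : i != j.
    by apply: contraTneq lt_O; rewrite /O => ->; rewrite /Onum subrr eqxx minnn ltnn.
  by rewrite /b /sadd /sshift ifF ?addr0; [case: (ord_gap ne_ij) | lia].
- rewrite /b /sadd /sshift rpredD ?branch_gap_real //.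
  by case: ifP; rewrite ?rpred0 // /ser_of_real complex_real.
Qed.

End Branches.

Lemma ord_eq_branch_gap (R : realType) M (L : 'I_M -> nat) (q : 'I_M -> {poly R})
    (psit : 'I_M -> nat -> R) i j n :
  ord_eq (branch_gap L q psit i j) n ->
  ord_eq (sadd (branch L q psit i) (sopp (branch L q psit j))) n.
Proof.
have nz_m1 : (-1 : R[i]) != 0 by rewrite oppr_eq0 oner_eq0.
apply: (ord_eq_scale nz_m1) => m.
by rewrite branch_gapE /sadd /sopp; ring.
Qed.

Theorem corollary3p6 (R : realType) (P : {poly {poly R[i]}}) (M : nat)
  (k : nat) (u : nat -> nat -> R[i]) (L : 'I_M -> nat) (q : 'I_M -> {poly R})
  (psi : 'I_M -> nat -> R[i])
  (t : R) (ut : nat -> nat -> R[i]) (psit : 'I_M -> nat -> R) :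
  (* P has no zeros in R x H *)
  (forall (x : R) (y : R[i]), 0 < Im y -> peval2 P (x%:C)%C y != 0) ->
  (* P and Pbar have no common factor *)
  (forall Q, pdivides2 Q P -> pdivides2 Q (pconj2 P) -> pconst2 Q) ->
  (* M = Ord(P(0,y)) and the coefficient of y^M in P(0,y) is real *)
  (pat0 P)`_M != 0 -> (forall m, (m < M)%N -> (pat0 P)`_m = 0) ->
  (pat0 P)`_M \is Num.real ->
  (* local factorization P = u prod_j (y + q_j(x) + x^{2L_j} psi_j(x^{1/k})),
     written after substituting x = s^k, as an identity in C{s,y} *)
  (0 < k)%N -> conv2 u -> u 0%N 0%N != 0 ->
  (forall j, (q j).[0] = 0) ->
  (forall j, (size (q j) <= 2 * L j)%N) ->
  (forall j, conv1 (psi j)) ->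
  (forall j, 0 < Im (psi j 0%N)) ->
  bsubst k (bser_of_poly P) =
    bmul (bsubst k u)
      (\big[@bmul R/@bone R]_(j < M)
         bfactor (sadd (ssubst k (ser_of_poly (map_poly (fun a : R => (a%:C)%C) (q j))))
                       (sshift (2 * k * L j) (psi j)))) ->
  (* t is proper, with the factorization
     A + tB = u(x,y;t) prod_j (y + q_j(x) + x^{2L_j} psi_j(x;t)) *)
  conv2 ut -> ut 0%N 0%N != 0 ->
  (forall j, conv1R (psit j)) ->
  (forall i j, i != j ->
     ord_eq (sadd (ser_of_poly (map_poly (fun a : R => (a%:C)%C) (q j - q i)))
                  (sadd (sshift (2 * L j) (ser_of_real (psit j)))
                        (sopp (sshift (2 * L i) (ser_of_real (psit i))))))
            (Onum (q i) (q j) (L i) (L j))) ->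
  bser_of_poly (Apart P + (t%:C)%C%:P%:P * Bpart P) =
    bmul ut (\big[@bmul R/@bone R]_(j < M)
         bfactor (sadd (ser_of_poly (map_poly (fun a : R => (a%:C)%C) (q j)))
                       (sshift (2 * L j) (ser_of_real (psit j))))) ->
  (* conclusion *)
  forall j : 'I_M,
    let yj := sopp (sadd (ser_of_poly (map_poly (fun a : R => (a%:C)%C) (q j)))
                         (sshift (2 * L j) (ser_of_real (psit j)))) in
    [/\ ord_eq (peval_ser (Bpart P) yj) (\sum_(i < M) Onum (q i) (q j) (L i) (L j)),
        (\sum_(i < M) Onum (q i) (q j) (L i) (L j)
          = 2 * L j + \sum_(i < M | i != j) Onum (q i) (q j) (L i) (L j))%N
      & ord_eq (peval_ser ((Apart P)^`() + (t%:C)%C%:P%:P * (Bpart P)^`()) yj)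
               (\sum_(i < M | i != j) Onum (q i) (q j) (L i) (L j))].
Proof.
move=> _ _ PM P_ltM _ k_gt0 _ u00 q0 _ _ Im_psi PE _ ut00 _ ord_gap GE j yj.
have L_gt0 := branch_L_gt0 q0 Im_psi PM P_ltM u00 PE.
have branch0 : branch L q psit j 0%N = 0.
  rewrite /branch /sadd /sshift /ser_of_poly coef_emb -horner_coef0 q0 ifF ?rmorph0 ?addr0 //.
  by have := L_gt0 j; lia.
have GE' m n := congr1 (fun b => b m n) GE.
have PsE m n := etrans (bser_of_poly_comp_Xn k_gt0 P m n) (congr1 (fun b => b m n) PE).
have u00' : bsubst k u 0%N 0%N != 0 by rewrite /bsubst dvdn0 div0n.
split.
- apply: (ord_eq_peval_ser_Bpart (peval_ser_factor_root GE' branch0)).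
  apply: (ord_eq_ssubst k_gt0); apply: ord_eq_ext (peval_ser_comp_Xn k_gt0 P yj) _.
  rewrite big_distrr; apply: (ord_eq_peval_ser_factors PsE u00') => [|i].
    by rewrite /ssubst dvdn0 div0n /yj /sopp -/(branch L q psit j) branch0 oppr0.
  by apply: ord_eq_branch_sub_branch => // /ord_gap; apply.
- by rewrite (bigD1 j) //= /Onum subrr eqxx minnn.
- have derivG : (Apart P + (t%:C)%C%:P%:P * Bpart P)^`() =
                 (Apart P)^`() + (t%:C)%C%:P%:P * (Bpart P)^`().
    by rewrite derivD (derivM ((t%:C)%C%:P%:P)) derivC mul0r add0r.
  rewrite -derivG.
  apply: (ord_eq_peval_ser_deriv_root GE' branch0 ut00) => i ne_ij.
  exact/ord_eq_branch_gap/ord_gap.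
Qed.
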